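(* In every model of $\mathsf{Md}_\bot$ the following conditional equations hold for all elements $x,y$: (1) $x\cdot y=1\rightarrow 0\cdot y=0$; (2) $x\cdot y=1\rightarrow x^{-1}=y$; (3) $0\cdot x=0\cdot y\rightarrow 0\cdot(x\cdot y)=0\cdot x$; (4) $0\cdot x\cdot y=0\rightarrow 0\cdot x=0$; (5) $0\cdot(x+y)=0\rightarrow 0\cdot x=0$; (6) $0\cdot x^{-1}=0\rightarrow 0\cdot x=0$; (7) $0\cdot x=\bot\rightarrow x=\bot$.
   Context: The signature has one sort, constants $0,1,\bot$, binary operations $+,\cdot$ and unary operations $-$ and $(\,\cdot\,)^{-1}$; $^{-1}$ binds stronger than $\cdot$, which binds stronger than $+$. $\mathsf{Md}_\bot$ is the set of equations (variables universally quantified): $(x+y)+z=x+(y+z)$; $x+y=y+x$; $x+0=x$; $x+(-x)=0\cdot x$; $(x\cdot y)\cdot z=x\cdot(y\cdot z)$; $x\cdot y=y\cdot x$; $1\cdot x=x$; $x\cdot(y+z)=x\cdot y+x\cdot z$; $-(-x)=x$; $0\cdot(x\cdot x)=0\cdot x$; $(x^{-1})^{-1}=x+0\cdot x^{-1}$; $x\cdot x^{-1}=1+0\cdot x^{-1}$; $(x\cdot y)^{-1}=x^{-1}\cdot y^{-1}$; $1^{-1}=1$; $0^{-1}=\bot$; $x+\bot=\bot$; $x\cdot\bot=\bot$. *)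

Record MdBot := {
  carrier :> Type;
  zero : carrier;
  one : carrier;
  bot : carrier;
  add : carrier -> carrier -> carrier;
  mul : carrier -> carrier -> carrier;
  opp : carrier -> carrier;
  inv : carrier -> carrier;
  ax_addA : forall x y z, add (add x y) z = add x (add y z);
  ax_addC : forall x y, add x y = add y x;
  ax_add0 : forall x, add x zero = x;
  ax_addN : forall x, add x (opp x) = mul zero x;
  ax_mulA : forall x y z, mul (mul x y) z = mul x (mul y z);
  ax_mulC : forall x y, mul x y = mul y x;
  ax_mul1 : forall x, mul one x = x;
  ax_mulD : forall x y z, mul x (add y z) = add (mul x y) (mul x z);
  ax_oppK : forall x, opp (opp x) = x;
  ax_0sq : forall x, mul zero (mul x x) = mul zero x;
  ax_invK : forall x, inv (inv x) = add x (mul zero (inv x));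
  ax_mulV : forall x, mul x (inv x) = add one (mul zero (inv x));
  ax_invM : forall x y, inv (mul x y) = mul (inv x) (inv y);
  ax_inv1 : inv one = one;
  ax_inv0 : inv zero = bot;
  ax_addbot : forall x, add x bot = bot;
  ax_mulbot : forall x, mul x bot = bot
}.

Arguments zero {m}.
Arguments one {m}.
Arguments bot {m}.
Arguments add {m}.
Arguments mul {m}.
Arguments opp {m}.
Arguments inv {m}.


(* Everything rests on x + 0x = x: multiplying by 0 shows that 0x is absorbed
   by 0a whenever a = a + 0x (e.g. a = xy or a = x + y), so 0a = 0 forces
   0x = 0.  From xy = 1 this gives 0y = 0, and with x x^-1 = 1 + 0 x^-1 applied
   to y^-1 x^-1 = 1 it identifies x^-1 with y.  Finally 0x = bot forces
   x = x + 0x = bot. *)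

Section CommonMeadowBot.
Variable M : MdBot.
Implicit Types x y a b : M.

Lemma add0r x : add zero x = x.
Proof. rewrite ax_addC; apply ax_add0. Qed.

Lemma mulr1 x : mul x one = x.
Proof. rewrite ax_mulC; apply ax_mul1. Qed.

Lemma mul00 : @mul M zero zero = zero.
Proof.
  pose proof (ax_mulD M zero one zero) as h.
  rewrite ax_add0, mulr1, add0r in h.
  symmetry; exact h.
Qed.

Lemma mul0_idem x : mul zero (mul zero x) = mul zero x.
Proof. rewrite <- ax_mulA, mul00; reflexivity. Qed.

Lemma add_mul_mul0l x y : add (mul x y) (mul zero x) = mul x y.
Proof.
  pose proof (ax_mulD M x y zero) as h.
  rewrite ax_add0, (ax_mulC M x zero) in h.
  symmetry; exact h.
Qed.

Lemma add_mul0r_id x : add x (mul zero x) = x.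
Proof. pose proof (add_mul_mul0l x one) as h; rewrite mulr1 in h; exact h. Qed.

Lemma mul0_absorbed a b :
  add a (mul zero b) = a -> mul zero a = zero -> mul zero b = zero.
Proof.
  intros Hab Ha.
  apply (f_equal (mul zero)) in Hab.
  rewrite ax_mulD, mul0_idem, Ha, add0r in Hab.
  exact Hab.
Qed.

Lemma mul0_inverse_right x y : mul x y = one -> mul zero y = zero.
Proof.
  intro Hxy.
  apply (mul0_absorbed one y); [| exact (mulr1 zero)].
  rewrite <- Hxy, (ax_mulC M x y); apply add_mul_mul0l.
Qed.

Lemma inv_right_inverse x y : mul x y = one -> inv x = y.
Proof.
  intro Hxy.
  assert (Hinv : mul (inv y) (inv x) = one).
  { rewrite <- ax_invM, ax_mulC, Hxy; apply ax_inv1. }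
  assert (HxV : mul x (inv x) = one).
  { rewrite ax_mulV, (mul0_inverse_right _ _ Hinv); apply ax_add0. }
  rewrite <- (ax_mul1 M y), <- HxV, (ax_mulC M x (inv x)), ax_mulA, Hxy.
  symmetry; apply mulr1.
Qed.

Lemma mul0M x y : mul zero (mul x y) = mul (mul zero x) (mul zero y).
Proof.
  rewrite ax_mulA, <- (ax_mulA M x zero y), (ax_mulC M x zero), ax_mulA.
  symmetry; apply mul0_idem.
Qed.

Lemma mul0M_eq x y :
  mul zero x = mul zero y -> mul zero (mul x y) = mul zero x.
Proof.
  intro H.
  rewrite mul0M, <- H, <- mul0M; apply ax_0sq.
Qed.

Lemma mul0_mulr_eq0 x y : mul (mul zero x) y = zero -> mul zero x = zero.
Proof.
  rewrite ax_mulA; apply mul0_absorbed, add_mul_mul0l.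
Qed.

Lemma mul0_addr_eq0 x y : mul zero (add x y) = zero -> mul zero x = zero.
Proof.
  apply mul0_absorbed.
  rewrite ax_addA, (ax_addC M y), <- ax_addA, add_mul0r_id; reflexivity.
Qed.

Lemma mul0_inv_eq0 x : mul zero (inv x) = zero -> mul zero x = zero.
Proof.
  intro H.
  apply (mul0_inverse_right (inv x)).
  rewrite ax_mulC, ax_mulV, H; apply ax_add0.
Qed.

Lemma mul0_eq_bot x : mul zero x = bot -> x = bot.
Proof. intro H; rewrite <- (add_mul0r_id x), H; apply ax_addbot. Qed.

End CommonMeadowBot.

Theorem proposition2p5 (M : MdBot) (x y : M) :
  (mul x y = one -> mul zero y = zero) /\
  (mul x y = one -> inv x = y) /\
  (mul zero x = mul zero y -> mul zero (mul x y) = mul zero x) /\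
  (mul (mul zero x) y = zero -> mul zero x = zero) /\
  (mul zero (add x y) = zero -> mul zero x = zero) /\
  (mul zero (inv x) = zero -> mul zero x = zero) /\
  (mul zero x = bot -> x = bot).
Proof.
  repeat split.
  - apply mul0_inverse_right.
  - apply inv_right_inverse.
  - apply mul0M_eq.
  - apply mul0_mulr_eq0.
  - apply mul0_addr_eq0.
  - apply mul0_inv_eq0.
  - apply mul0_eq_bot.
Qed.
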